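(* Consider the private information delivery (PID) problem with $K$ messages, $N\ge\lceil K/M\rceil$ servers and $M$ messages stored per server, where $1\le M\le K$ and $K/M\notin\mathbb{Z}$. Then (i) if $N \geq \frac{K}{\gcd(K,M)} - \left(\frac{M}{\gcd(K,M)}-1\right)\left(\lfloor K/M \rfloor - 1\right)$, the rate $M/K$ is achievable, so that $C=M/K$; and (ii) if $N=\lceil K/M\rceil$, then every achievable rate is at most $1/\lceil K/M\rceil$, so that $C=1/\lceil K/M\rceil$.
   Context: The PID problem with parameters $(K,N,M)$: There are $K$ independent messages $W_1,\dots,W_K$, each consisting of $L$ i.i.d. uniform symbols from a finite field $\mathbb{F}_p$, so that (in $p$-ary units) $H(W_k)=L$ for all $k$ and $H(W_1,\dots,W_K)=\sum_k H(W_k)$. There are $N$ servers; server $n$ stores $S_n=\{W_k : k\in\mathcal{S}_n\}$ for some $\mathcal{S}_n\subset\{1,\dots,K\}$ with $|\mathcal{S}_n|=M$ (a design choice). The servers share a common random variable $Z$ independent of the messages. For each $k\in\{1,\dots,K\}$, server $n$ sends an answer $A_n^{[k]}$ that is a deterministic function of $(S_n,Z)$ and consists of $D_n$ symbols of $\mathbb{F}_p$ ($D_n$ independent of $k$). Correctness: $H(W_k\mid A_1^{[k]},\dots,A_N^{[k]})=0$ for all $k$. Privacy: for all $k$, $(A_1^{[1]},\dots,A_N^{[1]},W_1)$ and $(A_1^{[k]},\dots,A_N^{[k]},W_k)$ are identically distributed. The rate is $R=L/\sum_n D_n$; a rate is achievable if some scheme (choice of $L$, $p$, storage sets, $Z$,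 answer functions) satisfying these constraints has rate at least $R$; the capacity $C$ is the supremum of achievable rates over all storage designs and schemes. It is known that $1/\lceil K/M\rceil\le C\le M/K$ whenever $N\ge\lceil K/M\rceil$. *)

From HB Require Import structures.
From mathcomp Require Import all_boot all_order all_algebra.
From mathcomp Require Import reals exp.
Set Implicit Arguments. Unset Strict Implicit. Unset Printing Implicit Defensive.
Import Order.TTheory GRing.Theory Num.Theory.
Local Open Scope ring_scope.

Section Prob.
Variable R : realType.

Definition Pr (Om : finType) (P : Om -> R) (E : pred Om) : R :=
  \sum_(w : Om | E w) P w.

(* conditional entropy H(X | Y) = E[ - log P(X | Y) ] (natural log; the
   base only rescales, and only the condition H = 0 is used) *)
Definition condH (Om : finType) (P : Om -> R) (A B : eqType)
    (X : Om -> A) (Y : Om -> B) : R :=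
  - \sum_(w : Om) P w *
      ln (Pr P (fun w' => (X w' == X w) && (Y w' == Y w)) /
          Pr P (fun w' => Y w' == Y w)).

Definition ident_distr (Om : finType) (P : Om -> R) (A : eqType)
    (X Y : Om -> A) : Prop :=
  forall a : A, Pr P (fun w => X w == a) = Pr P (fun w => Y w == a).
End Prob.

Definition cdiv (K M : nat) : nat := (K + M.-1) %/ M.

Definition msgs (p K L : nat) := {ffun 'I_K -> 'rV['F_p]_L}.

Definition answers (p N : nat) (D : 'I_N -> nat) :=
  {dffun forall n : 'I_N, 'rV['F_p]_(D n)}.

(* A PID scheme for parameters (K,N,M) achieving rate at least r:
   field F_p (p prime), message length L, storage sets S_n with |S_n| = M,
   common randomness Z on a finite set T with pmf PZ (independent of the
   uniformly distributed messages), answer lengths D_n, answer functions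
   ans k n depending only on (S_n, Z); sample space msgs * T. *)
Definition achievable (R : realType) (K N M : nat) (r : R) : Prop :=
  exists (p L : nat) (S : 'I_N -> {set 'I_K}) (T : finType) (PZ : T -> R)
         (D : 'I_N -> nat)
         (ans : forall (k : 'I_K) (n : 'I_N), msgs p K L -> T -> 'rV['F_p]_(D n)),
    let P : (msgs p K L * T)%type -> R :=
      fun w => PZ w.2 / #|{: msgs p K L}|%:R in
    let A : 'I_K -> (msgs p K L * T)%type -> answers p D :=
      fun k w => [ffun n => ans k n w.1 w.2] in
    [/\ prime p,
        forall n, #|S n| = M,
        (forall z, 0 <= PZ z) /\ \sum_(z : T) PZ z = 1,
        (forall k n (w w' : msgs p K L) z,
            (forall j, j \in S n -> w j = w' j) -> ans k n w z = ans k n w' z) &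
        [/\
        (forall k, condH P (fun w => w.1 k) (A k) = 0),
        (forall k k', ident_distr P (fun w => (A k w, w.1 k))
                                    (fun w => (A k' w, w.1 k'))) &
        r <= L%:R / (\sum_(n : 'I_N) D n)%:R]].

Definition is_capacity (R : realType) (K N M : nat) (C : R) : Prop :=
  achievable K N M C /\ forall r : R, achievable K N M r -> r <= C.

From HB Require Import structures.
From mathcomp Require Import all_boot all_order all_algebra perm.
From mathcomp Require Import reals exp.
From mathcomp Require Import zify.
Set Implicit Arguments. Unset Strict Implicit. Unset Printing Implicit Defensive.
Import Order.TTheory GRing.Theory Num.Theory.

(* Everything reduces to the cut-set condition on a storage design: sets [S n]
   of [M] messages and answer lengths [D n] of total [s] with
   [L <= \sum_(n | k \in S n) D n] for every message [k], giving rate [L / s].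
   It is necessary: with the randomness fixed at a value of positive
   probability and all messages but [W_k] frozen, correctness makes the answers
   an injective function of [W_k], and only those of servers storing it vary.
   It is sufficient: give every answer symbol its own evaluation point in a
   large prime field, let the symbols of the servers storing [W_k] carry a
   Vandermonde encoding of [W_k], and mask them with noise uniform on the
   kernel of the decoding map; shifting the noise by the difference of two
   encodings turns the answers for [k'] into those for [k]. Summing the
   condition over [k] bounds the rate by [M / K]; if [N] servers are so few
   that each holds a message stored nowhere else, [L <= D n] for every [n]
   bounds it by [1 / N]. Cyclic placements meet the second bound; for the
   first, [K %/ M - 1] disjoint blocks are followed by a cyclic placement of
   the remaining messages. *)

Definition cutset_feasible (K N M L s : nat) : Prop :=
  exists (S : 'I_N -> {set 'I_K}) (D : 'I_N -> nat),
    [/\ forall n, #|S n| = M,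
        forall k, L <= \sum_(n | k \in S n) D n &
        \sum_n D n = s].

Notation slot N D := {n : 'I_N & 'I_(D n)}.

Lemma card_slots_at N (D : 'I_N -> nat) (P : pred 'I_N) :
  #|[pred i : slot N D | P (tag i)]| = \sum_(n | P n) D n.
Proof.
rewrite -sum1_card (eq_bigr (fun n => \sum_(j : 'I_(D n)) 1)) => [|n _].
  by rewrite sig_big_dep; apply: eq_bigl => i; rewrite andbT.
by rewrite sum1_card card_ord.
Qed.

Lemma cutset_le_MK (K N M L s : nat) :
  cutset_feasible K N M L s -> K * L <= M * s.
Proof.
move=> [S [D [cardS cut <-]]].
have := @leq_sum _ (index_enum _) xpredT _ _ (fun k _ => cut k).
rewrite sum_nat_const card_ord => /leq_trans; apply.
rewrite (exchange_big_dep xpredT) //= big_distrr /=.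
by apply/eq_leq/eq_bigr => n _; rewrite sum_nat_const cardS mulnC.
Qed.

Lemma exists_private_message (K N M : nat) (S : 'I_N -> {set 'I_K}) :
  N.-1 * M < K -> (forall n, #|S n| = M) ->
  forall n, exists k, forall m, k \in S m -> m = n.
Proof.
move=> small cardS n.
suff /existsP[k /forallP priv] : [exists k, [forall m, (k \in S m) ==> (m == n)]].
  by exists k => m /(implyP (priv m))/eqP.
apply: contraLR small; rewrite negb_exists -leqNgt => /forallP shared.
have -> : N.-1 * M = \sum_(m | m != n) #|S m|.
  by rewrite (eq_bigr _ (fun m _ => cardS m)) sum_nat_const cardC1 card_ord mulnC.
rewrite -[K in K <= _]card_ord -sum1_card.
rewrite (eq_bigr (fun m => \sum_(k in S m) 1)); last by move=> m _; rewrite sum1_card.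
rewrite (exchange_big_dep xpredT) //=; apply: leq_sum => k _.
move: (shared k); rewrite negb_forall => /existsP[m].
by rewrite negb_imply => /andP[kSm mn]; rewrite (bigD1 m) ?mn //= kSm.
Qed.

Lemma cutset_le_inv (K N M L s : nat) :
  N.-1 * M < K -> cutset_feasible K N M L s -> N * L <= s.
Proof.
move=> small [S [D [cardS cut <-]]].
rewrite -[N in N * _]card_ord -sum_nat_const; apply: leq_sum => n _.
have [k priv] := exists_private_message small cardS n.
apply: (leq_trans (cut k)); rewrite big_mkcond (bigD1 n) //= big1 ?addn0.
  by case: ifP.
by move=> m /negPf mn; case: ifPn => // /priv /eqP; rewrite mn.
Qed.

Lemma cutset_nil M L : cutset_feasible 0 0 M L 0.
Proof.
by exists (fun _ => set0), (fun _ => 0); split=> [[]|[]|]; rewrite // big_ord0.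
Qed.

Lemma cutset_full M L : cutset_feasible M 1 M L L.
Proof.
exists (fun _ => setT), (fun _ => L); split=> [n|k|]; first by rewrite cardsT card_ord.
  by rewrite big_mkcond big_ord1 in_setT.
by rewrite big_ord1.
Qed.

Lemma cutset_cat K1 K2 N1 N2 M L s1 s2 :
  cutset_feasible K1 N1 M L s1 -> cutset_feasible K2 N2 M L s2 ->
  cutset_feasible (K1 + K2) (N1 + N2) M L (s1 + s2).
Proof.
move=> [S1 [D1 [cardS1 cut1 <-]]] [S2 [D2 [cardS2 cut2 <-]]].
pose S (n : 'I_(N1 + N2)) : {set 'I_(K1 + K2)} :=
  match split n with
  | inl n1 => lshift K2 @: S1 n1 | inr n2 => @rshift K1 K2 @: S2 n2 end.
pose D (n : 'I_(N1 + N2)) := match split n with inl n1 => D1 n1 | inr n2 => D2 n2 end.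
have split_l n1 : split (lshift N2 n1) = inl n1 := unsplitK (inl n1).
have split_r n2 : split (rshift N1 n2) = inr n2 := unsplitK (inr n2).
have mem_ll n1 k1 : (lshift K2 k1 \in S (lshift N2 n1)) = (k1 \in S1 n1).
  by rewrite /S split_l mem_imset //; exact: lshift_inj.
have mem_rr n2 k2 : (rshift K1 k2 \in S (rshift N1 n2)) = (k2 \in S2 n2).
  by rewrite /S split_r mem_imset //; exact: rshift_inj.
exists S, D; split=> [n|k|].
- rewrite /S; case: (split n) => [n1|n2]; rewrite card_imset //.
  + exact: lshift_inj.
  + exact: rshift_inj.
- rewrite big_split_ord /D; case: (split_ordP k) => [k1|k2] ->.
  + apply: leq_trans (leq_addr _ _); rewrite (eq_bigl _ _ (mem_ll ^~ k1)).
    by under eq_bigr do rewrite split_l; exact: cut1.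
  + apply: leq_trans (leq_addl _ _); rewrite (eq_bigl _ _ (mem_rr ^~ k2)).
    by under eq_bigr do rewrite split_r; exact: cut2.
- rewrite big_split_ord /D; congr (_ + _).
  + by apply: eq_bigr => n _; rewrite split_l.
  + by apply: eq_bigr => n _; rewrite split_r.
Qed.

Lemma cutset_rep q K N M L s :
  cutset_feasible K N M L s -> cutset_feasible (q * K) (q * N) M L (q * s).
Proof.
move=> feas; elim: q => [|q IHq]; first exact: cutset_nil.
by rewrite !mulSn; apply: cutset_cat.
Qed.

Lemma cutset_pad K N N' M L s : M <= K -> N <= N' ->
  cutset_feasible K N M L s -> cutset_feasible K N' M L s.
Proof.
move=> MK NN' [S [D [cardS cut <-]]]; rewrite -(subnKC NN').
pose S' (n : 'I_(N + (N' - N))) : {set 'I_K} :=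
  match split n with inl n1 => S n1 | inr _ => [set widen_ord MK t | t in 'I_M] end.
pose D' (n : 'I_(N + (N' - N))) := match split n with inl n1 => D n1 | inr _ => 0 end.
have split_l (n1 : 'I_N) : split (lshift (N' - N) n1) = inl n1 := unsplitK (inl n1).
have split_r (n2 : 'I_(N' - N)) : split (rshift N n2) = inr n2 := unsplitK (inr n2).
exists S', D'; split=> [n|k|].
- rewrite /S'; case: (split n) => // _.
  by rewrite card_imset ?card_ord // => t1 t2 /(congr1 val) /= /val_inj.
- rewrite big_split_ord; apply: leq_trans (leq_addr _ _).
  by rewrite (eq_big (fun n => k \in S n) D) => [|n|n _]; rewrite /S' /D' ?split_l.
- rewrite big_split_ord /= [X in _ + X]big1 ?addn0 => [|n _]; rewrite /D' ?split_r //.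
  by apply: eq_bigr => n _; rewrite split_l.
Qed.

(* Server [n] stores the [M] messages following position [n * M] cyclically;
   message [k] then sits on the [L] distinct servers [(k + m * K) %/ M], [m < L]. *)
Lemma cutset_cyclic K N M L : 0 < M -> M <= K -> L * K <= N * M ->
  cutset_feasible K N M L N.
Proof.
move=> M_gt0 MK LK_le.
have K_gt0 : 0 < K by apply: leq_trans MK.
pose window (n : 'I_N) (t : 'I_M) : 'I_K := Ordinal (ltn_pmod (n * M + t) K_gt0).
exists (fun n => [set window n t | t in 'I_M]), (fun _ => 1); split=> [n|k|].
- rewrite card_imset ?card_ord // => t1 t2 /(congr1 val)/eqP.
  rewrite /= eqn_modDl !modn_small ?(leq_trans (ltn_ord _) MK) // => /eqP.
  exact: val_inj.
- pose jn m := (k + m * K) %/ M.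
  have jn_lt (m : 'I_L) : jn m < N.
    rewrite ltn_divLR //; apply: leq_trans LK_le.
    apply: (@leq_trans (m.+1 * K)); first by rewrite mulSn ltn_add2r.
    by rewrite leq_mul2r ltn_ord orbT.
  have jn_homo : {homo jn : m1 m2 / m1 < m2}.
    move=> m1 m2 lt_m; have gap : k + m1 * K + M <= k + m2 * K.
      rewrite -addnA leq_add2l (leq_trans (leq_add (leqnn _) MK)) //.
      by rewrite -mulSnr leq_mul2r lt_m orbT.
    by have := leq_div2r M gap; rewrite divnDr ?dvdnn // divnn M_gt0 addn1.
  pose j (m : 'I_L) : 'I_N := Ordinal (jn_lt m).
  have j_inj : injective j.
    by move=> m1 m2 /(congr1 val) /= /(incn_inj (leq_mono jn_homo)) /val_inj.
  have j_stored m : k \in [set window (j m) t | t in 'I_M].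
    apply/imsetP; exists (Ordinal (ltn_pmod (k + m * K) M_gt0)) => //.
    by apply: val_inj; rewrite /= -divn_eq addnC modnMDl modn_small.
  rewrite sum1dep_card -[L in L <= _]card_ord -(card_imset _ j_inj).
  by apply/subset_leq_card/subsetP => _ /imsetP[m _ ->]; rewrite inE j_stored.
- by rewrite sum_nat_const card_ord muln1.
Qed.

Lemma leq_mul_cdiv K M : 0 < M -> K <= cdiv K M * M.
Proof.
by move=> M_gt0; have := ltn_ceil (K + M.-1) M_gt0; rewrite -/(cdiv K M) mulSn; lia.
Qed.

Lemma ltn_mul_cdiv_pred K M : 0 < K -> (cdiv K M).-1 * M < K.
Proof. by move=> K_gt0; have := leq_divM (K + M.-1) M; rewrite -/(cdiv K M); nia. Qed.

Lemma cdiv_gt0 K M : 0 < K -> 0 < M -> 0 < cdiv K M.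
Proof. by move=> K_gt0 M_gt0; rewrite /cdiv divn_gt0 //; lia. Qed.

Lemma cutset_cdiv K N M : 0 < M -> M <= K -> cdiv K M <= N ->
  cutset_feasible K N M 1 N.
Proof.
move=> M_gt0 MK cdiv_le; apply: cutset_cyclic; rewrite // mul1n.
by apply: leq_trans (leq_mul_cdiv K M_gt0) _; rewrite leq_mul2r cdiv_le orbT.
Qed.

(* The first [q] servers hold disjoint blocks of [M] messages with [b] symbols
   each; the remaining [K'] messages go to the cyclic design on [a'] servers. *)
Lemma cutset_gcd K N M : 0 < M -> M <= K ->
  K %/ gcdn K M - (M %/ gcdn K M - 1) * (K %/ M - 1) <= N ->
  cutset_feasible K N M (M %/ gcdn K M) (K %/ gcdn K M).
Proof.
move=> M_gt0 MK N_ge.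
set g := gcdn K M in N_ge *; set b := M %/ g in N_ge *; set q := K %/ M - 1 in N_ge.
set K' := K - q * M; set a' := K' %/ g.
have g_dvdM : g %| M := dvdn_gcdr K M.
have g_dvdK' : g %| K' by rewrite dvdn_sub ?dvdn_mull ?dvdn_gcdl.
have g_gt0 : 0 < g by rewrite gcdn_gt0 M_gt0 orbT.
have b_gt0 : 0 < b by rewrite divn_gt0 // dvdn_leq.
have qM_le : q * M + M <= K.
  by rewrite addnC -mulSn /q subn1 prednK ?leq_divM // divn_gt0.
have K_split : K = q * M + K' by rewrite subnKC // (leq_trans (leq_addr M _) qM_le).
have MK' : M <= K' by rewrite /K' leq_subRL // (leq_trans (leq_addr M _) qM_le).
have a_split : K %/ g = q * b + a'.
  by rewrite {1}K_split divnDl ?dvdn_mull // -muln_divA.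
have blocks : cutset_feasible (q * M) q M b (q * b).
  by rewrite -{2}[q]muln1; apply/cutset_rep/cutset_full.
have cyclic : cutset_feasible K' a' M b a'.
  apply: cutset_cyclic => //.
  by rewrite divn_mulAC // divn_mulAC // mulnC.
rewrite a_split {1}K_split; apply: cutset_pad (cutset_cat blocks cyclic).
- by rewrite -K_split.
- move: N_ge; rewrite a_split mulnBl mul1n [q * b]mulnC.
  by have := leq_pmull q b_gt0; lia.
Qed.

Local Open Scope ring_scope.

Section Distributions.
Variables (R : realType) (Om : finType) (P : Om -> R).

Lemma Pr_ge0 (E : pred Om) : (forall w, 0 <= P w) -> 0 <= Pr P E.
Proof. by move=> P_ge0; apply: sumr_ge0. Qed.

(* Every term [- P w * ln (Pr[X = X w, Y = Y w] / Pr[Y = Y w])] is nonnegative,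
   so all vanish; at [w] in the support this forces [Pr[Y = Y w, X <> X w] = 0]. *)
Lemma condH_eq0_determined (A B : eqType) (X : Om -> A) (Y : Om -> B) :
  (forall w, 0 <= P w) -> condH P X Y = 0 ->
  forall w w', 0 < P w -> 0 < P w' -> Y w = Y w' -> X w = X w'.
Proof.
move=> P_ge0 H0 w w' Pw Pw' eY.
pose a v := Pr P (fun u => (X u == X v) && (Y u == Y v)).
pose b v := Pr P (fun u => Y u == Y v).
pose c v := Pr P (fun u => (Y u == Y v) && (X u != X v)).
have b_split v : b v = a v + c v.
  rewrite /b /Pr (bigID (fun u => X u == X v)) /=; congr (_ + _).
  by apply: eq_bigl => u; rewrite andbC.
have term_ge0 v : 0 <= - (P v * ln (a v / b v)).
  rewrite oppr_ge0 mulr_ge0_le0 // ln_le0 //.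
  have [->|b_neq0] := eqVneq (b v) 0; first by rewrite invr0 mulr0 ler01.
  have b_gt0 : 0 < b v by rewrite lt_def b_neq0 b_split addr_ge0 ?Pr_ge0.
  by rewrite ler_pdivrMr // mul1r b_split lerDl Pr_ge0.
have terms_sum0 : \sum_v - (P v * ln (a v / b v)) = 0 by rewrite sumrN.
have /(_ w isT)/eqP := psumr_eq0P (fun v _ => term_ge0 v) terms_sum0.
rewrite oppr_eq0 mulf_eq0 (gt_eqF Pw) /=.
have a_gt0 : 0 < a w.
  apply: (lt_le_trans Pw); rewrite /a /Pr (bigD1 w) ?eqxx //= lerDl.
  exact: sumr_ge0.
have b_gt0 : 0 < b w by rewrite b_split ltr_wpDr ?Pr_ge0.
rewrite ln_eq0 ?divr_gt0 // => /eqP/divr1_eq/eqP; rewrite b_split -subr_eq0 opprD addrA.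
rewrite subrr add0r oppr_eq0 => /eqP c_eq0; apply/eqP; apply: contraT => neq.
have /(_ w') := psumr_eq0P (fun v _ => P_ge0 v) c_eq0.
by rewrite eY eqxx eq_sym neq => /(_ isT) P_eq0; move: Pw'; rewrite P_eq0 ltxx.
Qed.

Lemma condH_eq0_function (A B : eqType) (X : Om -> A) (Y : Om -> B) (f : B -> A) :
  (forall w, X w = f (Y w)) -> condH P X Y = 0.
Proof.
move=> XY; rewrite /condH big1 ?oppr0 // => w _.
have -> : Pr P (fun u => (X u == X w) && (Y u == Y w)) = Pr P (fun u => Y u == Y w).
  apply: eq_bigl => u; case: (Y u =P Y w) => [eY|]; last by rewrite andbF.
  by rewrite andbT !XY eY eqxx.
have [->|b_neq0] := eqVneq (Pr P (fun u => Y u == Y w)) 0.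
  by rewrite mul0r ln0 ?mulr0.
by rewrite mulfV // ln1 mulr0.
Qed.

Lemma ident_distr_reindex (A : eqType) (X Y : Om -> A) (h : Om -> Om) :
  injective h -> (forall w, P (h w) = P w) -> (forall w, X (h w) = Y w) ->
  ident_distr P X Y.
Proof.
move=> h_inj Ph XhY a; rewrite /Pr (reindex_inj h_inj) /=.
by apply: eq_big => [w|w _]; rewrite ?XhY ?Ph.
Qed.

End Distributions.

Lemma injective_answers_le_free p L N (D : 'I_N -> nat) (B : pred 'I_N)
    (g : 'rV['F_p]_L -> answers p D) (a0 : answers p D) :
  prime p -> injective g -> (forall y n, ~~ B n -> g y n = a0 n) ->
  (L <= \sum_(n | B n) D n)%N.
Proof.
move=> p_pr g_inj g_fixed.
pose F n := if B n then predT else pred1 (a0 n).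
have img_sub : [set g y | y in [set: 'rV['F_p]_L]] \subset
               (family F : simpl_pred (answers p D)).
  apply/subsetP => _ /imsetP[y _ ->]; apply/familyP => n.
  by rewrite /F; case: ifPn => // /g_fixed ->; rewrite inE.
have card_F n : #|F n| = (p ^ (if B n then D n else 0))%N.
  rewrite /F; case: ifP => _; last exact: card1.
  by rewrite cardT -cardT card_mx card_Fp // mul1n.
have := subset_leq_card img_sub.
rewrite card_imset // cardsT card_mx card_Fp // mul1n card_family foldrE big_map big_enum.
rewrite (eq_bigr _ (fun n _ => card_F n)) -expn_sum -big_mkcond /=.
by rewrite leq_exp2l // prime_gt1.
Qed.

Lemma achievable_cutset (R : realType) (K N M : nat) (r : R) :
  achievable K N M r ->
  exists L s, cutset_feasible K N M L s /\ r <= L%:R / s%:R.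
Proof.
move=> [p [L [S [T [PZ [D [ans]]]]]]].
set P := (fun w => _ : R); set A := (fun k w => _ : answers p D).
case=> p_pr cardS [PZ_ge0 PZ_sum1] ans_local [correct _ rate].
exists L, (\sum_n D n)%N; split => //; exists S, D; split => // k.
have [z PZ_gt0] : exists z, 0 < PZ z.
  apply/existsP; apply: contraT; rewrite negb_exists => /forallP PZ_le0.
  suff : \sum_(z : T) PZ z = 0 by rewrite PZ_sum1 => /eqP; rewrite oner_eq0.
  by apply: big1 => z _; apply/eqP; rewrite eq_le PZ_ge0 andbT leNgt PZ_le0.
pose w0 : msgs p K L := [ffun => 0].
pose upd (y : 'rV['F_p]_L) : msgs p K L := [ffun j => if j == k then y else 0].
have P_ge0 w : 0 <= P w by rewrite divr_ge0.
have P_gt0 y : 0 < P (upd y, z).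
  by rewrite divr_gt0 // ltr0n; apply/card_gt0P; exists w0.
apply: (injective_answers_le_free (g := fun y => A k (upd y, z)) (a0 := A k (w0, z))) => //.
  move=> y1 y2 eA.
  have := condH_eq0_determined P_ge0 (correct k) (P_gt0 y1) (P_gt0 y2) eA.
  by rewrite /= !ffunE eqxx.
move=> y n kNSn; rewrite /A !ffunE /=; apply: ans_local => j jSn.
by rewrite !ffunE; case: eqP => // jk; move: kNSn; rewrite -jk jSn.
Qed.

Lemma ler_ratio_nat (R : realType) (L s a b : nat) :
  (0 < b)%N -> (L * b <= a * s)%N -> L%:R / s%:R <= a%:R / b%:R :> R.
Proof.
move=> b_gt0 cross; have [->|s_gt0] := posnP s; first by rewrite invr0 mulr0 divr_ge0.
by rewrite ler_pdivrMr ?ltr0n // mulrAC ler_pdivlMr ?ltr0n // -!natrM ler_nat.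
Qed.

Lemma achievable_le_MK (R : realType) (K N M : nat) (r : R) :
  (0 < K)%N -> achievable K N M r -> r <= M%:R / K%:R.
Proof.
move=> K_gt0 /achievable_cutset[L [s [cut r_le]]].
by apply: (le_trans r_le); apply: ler_ratio_nat; rewrite // mulnC (cutset_le_MK cut).
Qed.

Lemma achievable_le_inv (R : realType) (K N M : nat) (r : R) :
  (0 < N)%N -> (N.-1 * M < K)%N -> achievable K N M r -> r <= 1 / N%:R.
Proof.
move=> N_gt0 small /achievable_cutset[L [s [cut r_le]]].
apply: (le_trans r_le); apply: (@ler_ratio_nat R L s 1 N); rewrite // mul1n mulnC.
exact: cutset_le_inv cut.
Qed.

Section LinearScheme.
Variables (p K N M L : nat) (S : 'I_N -> {set 'I_K}) (D : 'I_N -> nat).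
Variables (x : slot N D -> 'F_p) (pos : 'I_K -> 'I_L -> slot N D).
Hypotheses (x_inj : injective x) (pos_inj : forall k, injective (pos k)).
Hypothesis pos_stored : forall k m, k \in S (tag (pos k m)).

Definition moments (f : {ffun slot N D -> 'F_p}) : 'rV['F_p]_L :=
  \row_(l < L) \sum_i x i ^+ l * f i.

Lemma momentsD : {morph moments : f g / f + g}.
Proof.
move=> f g; apply/rowP => l; rewrite !mxE -big_split.
by apply: eq_bigr => i _; rewrite !ffunE mulrDr.
Qed.

Lemma momentsB : {morph moments : f g / f - g}.
Proof.
move=> f g; apply/rowP => l; rewrite !mxE -sumrB.
by apply: eq_bigr => i _; rewrite !ffunE mulrBr.
Qed.

Definition vdm k : 'M['F_p]_L := Vandermonde L (\row_m x (pos k m)).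

Lemma vdm_unit k : vdm k \in unitmx.
Proof.
rewrite unitmxE /vdm det_Vandermonde unitfE prodf_seq_neq0.
apply/allP => i _; apply/implyP => _; rewrite prodf_seq_neq0.
apply/allP => j _; apply/implyP => ij; rewrite !mxE subr_eq0.
by apply: contraTneq ij => /x_inj/pos_inj ->; rewrite ltnn.
Qed.

Definition encode k (y : 'rV['F_p]_L) : {ffun slot N D -> 'F_p} :=
  [ffun i => \sum_(m | pos k m == i) (y *m invmx (vdm k)^T) 0 m].

Lemma moments_encode k y : moments (encode k y) = y.
Proof.
set c := y *m invmx (vdm k)^T.
have -> : moments (encode k y) = c *m (vdm k)^T.
  apply/rowP => l; rewrite !mxE.
  under eq_bigr do rewrite ffunE big_distrr /=.
  rewrite (exchange_big_dep xpredT) //=; apply: eq_bigr => m _.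
  rewrite (big_pred1 (pos k m)) => [|i]; last by rewrite eq_sym.
  by rewrite !mxE mulrC.
by rewrite /c -mulmxA mulVmx ?mulmx1 // unitmx_tr vdm_unit.
Qed.

Lemma encode_unstored k y i : k \notin S (tag i) -> encode k y i = 0.
Proof.
move=> kNS; rewrite ffunE big1 // => m /eqP pos_m.
by move: (pos_stored k m) kNS; rewrite pos_m => ->.
Qed.

(* The common randomness is uniform on the kernel of [moments]: it masks every
   answer symbol, yet [moments] of the answers still recovers [w k]. *)
Definition noise := {u : {ffun slot N D -> 'F_p} | moments u == 0}.

Definition noise_shift (d : {ffun slot N D -> 'F_p}) (u : noise) : noise :=
  insubd u (val u + d).

Lemma val_noise_shift d u : moments d = 0 -> val (noise_shift d u) = val u + d.
Proof.
by move=> d0; rewrite insubdK // unfold_in /= momentsD d0 (eqP (valP u)) addr0.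
Qed.

Definition answer k n (w : msgs p K L) (u : noise) : 'rV['F_p]_(D n) :=
  \row_j ((if k \in S n then encode k (w k) (Tagged _ j) else 0) + val u (Tagged _ j)).

Lemma answerE k n w u j :
  answer k n w u 0 j = (encode k (w k) + val u) (Tagged _ j).
Proof.
rewrite [RHS]ffunE mxE.
by case: ifPn => // kNS; rewrite encode_unstored.
Qed.

Definition decode (a : answers p D) : 'rV['F_p]_L :=
  moments [ffun i => a (tag i) 0 (tagged i)].

Lemma decode_answer k w u : decode [ffun n => answer k n w u] = w k.
Proof.
rewrite /decode (_ : [ffun i => _] = encode k (w k) + val u).
  by rewrite momentsD moments_encode (eqP (valP u)) addr0.
by apply/ffunP => i; case: i => n j; rewrite [LHS]ffunE ffunE answerE.
Qed.

Lemma linear_scheme_achievable (R : realType) :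
  prime p -> (forall n, #|S n| = M) ->
  achievable K N M (L%:R / (\sum_n D n)%:R : R).
Proof.
move=> p_pr cardS.
have moments0 : moments 0 = 0 by rewrite -(subrr 0) momentsB subrr.
have noise_gt0 : (0 < #|{: noise}|)%N.
  by apply/card_gt0P; exists (exist _ 0 (introT eqP moments0)).
exists p, L, S, noise, (fun _ => 1 / #|{: noise}|%:R), D, answer.
split => //.
- split => [z|]; first by rewrite divr_ge0.
  rewrite sumr_const; change (1 / #|{: noise}|%:R *+ #|{: noise}| = 1 :> R).
  by rewrite -mulr_natr mul1r mulVf // pnatr_eq0 -lt0n.
- by move=> k n w w' u same; apply/rowP => j; rewrite !mxE; case: ifP => // /same ->.
split => //.
- move=> k; apply: (@condH_eq0_function _ _ _ _ _ _ _ decode) => -[w u].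
  by rewrite /= decode_answer.
move=> k k'.
pose swap (w : msgs p K L) : msgs p K L := [ffun j => w (tperm k k' j)].
have swap_k w : swap w k = w k' by rewrite ffunE tpermL.
pose delta (w : msgs p K L) := encode k' (w k') - encode k (w k').
have delta0 w : moments (delta w) = 0 by rewrite momentsB !moments_encode subrr.
pose h wu := (swap wu.1, noise_shift (delta wu.1) wu.2).
apply: (@ident_distr_reindex _ _ _ _ _ _ h) => //.
  move=> [w1 u1] [w2 u2] [/ffunP e_swap /(congr1 val)].
  have -> : w1 = w2.
    by apply/ffunP => j; have := e_swap (tperm k k' j); rewrite !ffunE tpermK.
  by rewrite !val_noise_shift // => /addIr/val_inj ->.
move=> [w u] /=; congr (_, _); last exact: swap_k.
apply/ffunP => n; apply/rowP => j; rewrite !ffunE !answerE swap_k.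
by rewrite val_noise_shift // addrCA subrKC addrC.
Qed.

End LinearScheme.

Lemma enum_rank_Fp_inj (T : finType) p :
  prime p -> (#|T| < p)%N -> injective (fun i : T => (enum_rank i)%:R : 'F_p).
Proof.
move=> p_pr T_lt_p i j /(congr1 val); rewrite /= !val_Fp_nat // !modn_small.
- by move/ord_inj/enum_rank_inj.
- exact: ltn_trans (ltn_ord _) T_lt_p.
- exact: ltn_trans (ltn_ord _) T_lt_p.
Qed.

Lemma cutset_achievable (R : realType) (K N M L s : nat) :
  cutset_feasible K N M L s -> achievable K N M (L%:R / s%:R : R).
Proof.
move=> [S [D [cardS cut <-]]].
pose stored k := [pred i : slot N D | k \in S (tag i)].
have cut_stored k : (L <= #|stored k|)%N.
  by rewrite (card_slots_at D (fun n => k \in S n)).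
pose pos k m := enum_val (widen_ord (cut_stored k) m).
have [p p_gt p_pr] := prime_above #|{: slot N D}|.
apply: (@linear_scheme_achievable p K N M L S D (fun i => (enum_rank i)%:R) pos) => //.
- exact: enum_rank_Fp_inj.
- by move=> k m1 m2 /enum_val_inj/(congr1 val) /= /val_inj.
- by move=> k m; have := enum_valP (widen_ord (cut_stored k) m).
Qed.

Lemma ratio_divn_gcd (F : numFieldType) K M : (0 < M)%N ->
  M%:R / K%:R = (M %/ gcdn K M)%:R / (K %/ gcdn K M)%:R :> F.
Proof.
move=> M_gt0; set g := gcdn K M.
have g_gt0 : (0 < g)%N by rewrite gcdn_gt0 M_gt0 orbT.
rewrite -[in LHS](divnK (dvdn_gcdr K M : (g %| M)%N)).
rewrite -[in LHS](divnK (dvdn_gcdl K M : (g %| K)%N)).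
by rewrite !natrM -mulf_div divff ?mulr1 // pnatr_eq0 -lt0n.
Qed.

Theorem theorem2 (R : realType) (K N M : nat) :
  (1 <= M)%N -> (M <= K)%N -> ~~ (M %| K)%N -> (cdiv K M <= N)%N ->
  ((K %/ gcdn K M - (M %/ gcdn K M - 1) * (K %/ M - 1) <= N)%N ->
      is_capacity K N M (M%:R / K%:R : R))
  /\
  (N = cdiv K M ->
      (forall r : R, achievable K N M r -> r <= 1 / (cdiv K M)%:R) /\
      is_capacity K N M (1 / (cdiv K M)%:R : R)).
Proof.
move=> M_gt0 MK _ cdiv_le; have K_gt0 : (0 < K)%N := leq_trans M_gt0 MK.
split=> [N_ge|N_eq].
  split; last by move=> r; apply: achievable_le_MK.
  by rewrite (ratio_divn_gcd _ _ M_gt0); apply/cutset_achievable/cutset_gcd.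
rewrite -N_eq.
have upper (r : R) : achievable K N M r -> r <= 1 / N%:R.
  by apply: achievable_le_inv; rewrite N_eq ?cdiv_gt0 ?ltn_mul_cdiv_pred.
split; [exact: upper | split; last exact: upper].
exact: (@cutset_achievable R K N M 1 N (cutset_cdiv M_gt0 MK cdiv_le)).
Qed.
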